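(* Let $P,N_0,B>0$, $\mathrm{SNR}=\frac{P}{BN_0}<1$, $\alpha\in(0,1]$, $\epsilon\in(0,\alpha)$, $\delta=\mathrm{SNR}^{1-\alpha}$, and $L_c=B_cT_c$. If there exists $\sigma\in(0,\epsilon)$ such that \[ L_c=\frac{N_{\mathrm{t}}^2}{(N_\mathrm{r}+N_\mathrm{t})^2}\mathrm{SNR}^{-2(\sigma+\alpha)}, \] then \[ \delta B <\frac{P}{N_0}\frac{N_\mathrm{r}+N_\mathrm{t}}{N_\mathrm{t}}\sqrt{B_cT_c}\qquad\text{and}\qquad \delta B^{1+\epsilon} >\left(\frac{P}{N_0}\right)^{1+\epsilon}\frac{N_\mathrm{r}+N_\mathrm{t}}{N_\mathrm{t}}\sqrt{B_cT_c}. \]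
   Context: $P$ is the average transmit power, $N_0$ the noise power spectral density, $B$ the bandwidth, $N_{\mathrm{t}},N_{\mathrm{r}}$ the numbers of transmit and receive antennas, $T_c$ the coherence time and $B_c$ the coherence bandwidth of a block-fading channel, $L_c=B_cT_c$ the coherence length, and $\delta\in(0,1]$ the transmission duty cycle (peakiness parameter). *)

From Stdlib Require Import Reals.
Open Scope R_scope.

Definition SNR (P N0 B : R) : R := P / (B * N0).

Definition duty_cycle (P N0 B alpha : R) : R := Rpower (SNR P N0 B) (1 - alpha).

(* Write s = SNR < 1 and a = Nt / (Nr + Nt).  The hypothesis on Lc gives
   sqrt (Bc Tc) = a s^-(sigma + alpha), and P / N0 = s B, so the two right-hand
   sides equal B s^(1 - alpha - sigma) and B^(1+eps) s^(1 + eps - alpha - sigma)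
   while the left-hand sides are B s^(1 - alpha) and B^(1+eps) s^(1 - alpha).
   Since 0 < sigma < eps and t |-> s^t is decreasing, both inequalities follow. *)

From Stdlib Require Import Reals Lra.
Open Scope R_scope.

Lemma Rpower_lt_base_lt1 (s x y : R) :
  0 < s < 1 -> y < x -> Rpower s x < Rpower s y.
Proof.
  intros [hs0 hs1] hxy. unfold Rpower. apply exp_increasing.
  assert (hln : ln s < 0) by (rewrite <- ln_1; apply ln_increasing; lra).
  nra.
Qed.

Lemma Rpower_pos (s t : R) : 0 < Rpower s t.
Proof. apply exp_pos. Qed.

Lemma sqrt_sqr_mul_Rpower (a s t : R) :
  0 <= a -> sqrt (a ^ 2 * Rpower s (2 * t)) = a * Rpower s t.
Proof.
  intros ha.
  replace (2 * t) with (t + t) by ring.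
  rewrite Rpower_plus, <- sqrt_pow2.
  - f_equal. ring.
  - pose proof (Rpower_pos s t). nra.
Qed.

Lemma SNR_pos (P N0 B : R) : 0 < P -> 0 < N0 -> 0 < B -> 0 < SNR P N0 B.
Proof. intros. unfold SNR. apply Rdiv_lt_0_compat; nra. Qed.

Lemma power_div_noise_eq (P N0 B : R) :
  0 < N0 -> 0 < B -> P / N0 = SNR P N0 B * B.
Proof. intros. unfold SNR. field. lra. Qed.

Lemma Rpower_mul_cancel (s c K a u v : R) :
  K * a = 1 -> Rpower s u * c * K * (a * Rpower s (- v)) = c * Rpower s (u - v).
Proof.
  intros hKa. unfold Rminus. rewrite Rpower_plus.
  transitivity (c * (Rpower s u * Rpower s (- v)) * (K * a)); [ring|].
  rewrite hKa. ring.
Qed.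

Theorem corollary3
  (P N0 B Bc Tc Lc alpha eps : R) (Nt Nr : nat)
  (hP : 0 < P) (hN0 : 0 < N0) (hB : 0 < B)
  (hBc : 0 < Bc) (hTc : 0 < Tc)
  (hNt : (1 <= Nt)%nat) (hNr : (1 <= Nr)%nat)
  (hSNR : SNR P N0 B < 1)
  (halpha : 0 < alpha <= 1)
  (heps : 0 < eps < alpha)
  (hLc : Lc = Bc * Tc)
  (hsigma : exists sigma, 0 < sigma < eps /\
      Lc = (INR Nt ^ 2 / (INR Nr + INR Nt) ^ 2)
             * Rpower (SNR P N0 B) (-2 * (sigma + alpha))) :
  duty_cycle P N0 B alpha * B
    < (P / N0) * ((INR Nr + INR Nt) / INR Nt) * sqrt (Bc * Tc)
  /\
  duty_cycle P N0 B alpha * Rpower B (1 + eps)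
    > Rpower (P / N0) (1 + eps) * ((INR Nr + INR Nt) / INR Nt) * sqrt (Bc * Tc).
Proof.
  destruct hsigma as [sigma [hsigma hL]].
  assert (hs : 0 < SNR P N0 B < 1) by (split; [apply SNR_pos|]; assumption).
  assert (hnt : 1 <= INR Nt) by (apply (le_INR 1); exact hNt).
  assert (hnr : 1 <= INR Nr) by (apply (le_INR 1); exact hNr).
  assert (hsqrt : sqrt (Bc * Tc)
            = INR Nt / (INR Nr + INR Nt) * Rpower (SNR P N0 B) (- (sigma + alpha))).
  { rewrite <- hLc, hL.
    rewrite <- (sqrt_sqr_mul_Rpower (INR Nt / (INR Nr + INR Nt))).
    - f_equal. f_equal; [field; lra | f_equal; ring].
    - apply Rlt_le, Rdiv_lt_0_compat; lra. }
  assert (hKa : (INR Nr + INR Nt) / INR Nt * (INR Nt / (INR Nr + INR Nt)) = 1)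
    by (field; lra).
  unfold duty_cycle. rewrite hsqrt, (power_div_noise_eq P N0 B) by assumption.
  split.
  - rewrite <- (Rpower_1 (SNR P N0 B)) at 2 by lra.
    rewrite Rpower_mul_cancel by exact hKa.
    rewrite (Rmult_comm _ B). apply Rmult_lt_compat_l; [lra|].
    apply Rpower_lt_base_lt1; lra.
  - rewrite <- Rpower_mult_distr by lra.
    rewrite Rpower_mul_cancel by exact hKa.
    rewrite (Rmult_comm _ (Rpower B _)). apply Rmult_lt_compat_l.
    + apply Rpower_pos.
    + apply Rpower_lt_base_lt1; lra.
Qed.
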